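(* Let $x\in X(l_1,\dots,l_n,l_\infty)$ and let $i\ne j$ be indices in $\{1,\dots,n\}$ with $l_i=l_j$. Then there is $g\in J_n$ such that $gx$ is the diagram obtained from $x$ by interchanging the labels $z_i$ and $z_j$ (i.e. exchanging the positions of $z_i$ and $z_j$) while keeping the unlabelled arc configuration (the numbers of arcs between each pair of positions) unchanged.
   Context: Cactus group: $J_n$ is the group generated by $s_{p,q}$, $1\le p<q\le n$, subject to the relations $s_{p,q}^2=e$; $s_{p,q}s_{p',q'}=s_{p',q'}s_{p,q}$ if $[p,q]$ and $[p',q']$ are disjoint; $s_{p,q}s_{p',q'}s_{p,q}=s_{p+q-q',p+q-p'}$ if $p\le p'<q'\le q$. Arc diagrams: fix nonnegative integers $l_1,\dots,l_n,l_\infty$. On the boundary circle of a closed disc place $n+1$ marked positions: position $0$ (occupied by the distinguished point $z_\infty$) and positions $1,\dots,n$ following it in clockwise order. An arc diagram consists of a bijective assignment of the labels $z_1,\dots,z_n$ to the positions $1,\dots,n$, together with a finite collection of simple arcs in the disc, pairwise disjoint except possibly at endpoints, each joining two distinct marked points, such that the point labelled $z_j$ is an endpoint of exactly $l_j$ arcs for each $j\in\{1,\dots,n,\infty\}$ ($l_j$ is the valence of $z_j$). Parallel arcs are allowed. Diagrams are considered up to isotopy fixing the marked points; equivalently a diagram is determined by the labelling and the number of arcs joining each pair of marked points. $X(l_1,\dots,l_n,l_\infty)$ is the set of all such diagrams. Action: for $1\le p<q\le n$, $s_{p,q}x$ is obtained by choosing a chord $\ell$ separating positions $p,\dots,q$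 from the other marked points, isotoping arcs to cross $\ell$ at most once, reflecting the cut-off region containing positions $p,\dots,q$ by the reflection reversing $\ell$ (so the label at position $p+t$ moves to position $q-t$ and crossing points on $\ell$ are reversed in order), keeping the rest unchanged, and reconnecting arcs at $\ell$. Words act right to left; this is an action of $J_n$. *)

From mathcomp Require Import all_boot.
Set Implicit Arguments. Unset Strict Implicit. Unset Printing Implicit Defensive.

(* Marked positions on the circle: 'I_n.+1, position 0 carries z_oo,
   positions 1..n follow clockwise.  Labels are also 'I_n.+1: label 0 is
   z_oo, label j (1<=j<=n) is z_j.  A diagram is a pair (lab, m):
   - lab a  = index of the label at position a;
   - m (a,b) = number of arcs joining positions a and b, used only for a < b
     (required to be 0 otherwise). *)
Definition diagram (n : nat) :=
  ({ffun 'I_n.+1 -> 'I_n.+1} * {ffun 'I_n.+1 * 'I_n.+1 -> nat})%type.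

Definition dlab n (x : diagram n) := x.1.
Definition dmult n (x : diagram n) := x.2.

Definition valence n (x : diagram n) (a : 'I_n.+1) : nat :=
  \sum_(b : 'I_n.+1) (dmult x (a, b) + dmult x (b, a)).

(* membership in X(l_1,...,l_n,l_oo); l ord0 is l_oo, l j is l_j *)
Definition inX n (l : 'I_n.+1 -> nat) (x : diagram n) : Prop :=
  [/\ dlab x ord0 = ord0,
      injective (dlab x),
      (forall a b : 'I_n.+1, ~~ (nat_of_ord a < b)%N -> dmult x (a, b) = 0),
      (* arcs pairwise disjoint except at endpoints: no two crossing chords *)
      (forall a b c d : 'I_n.+1, (a < c)%N -> (c < b)%N -> (b < d)%N ->
          dmult x (a, b) = 0 \/ dmult x (c, d) = 0)
    & (forall a : 'I_n.+1, valence x a = l (dlab x a))].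

Section Cactus.
Variables (n p q : nat).
Local Notation P := 'I_n.+1.

Definition inside (a : P) : bool := (p <= a <= q)%N.
Definition refl (a : P) : P := if inside a then inord (p + q - a) else a.

Variable x : diagram n.
Local Notation m := (dmult x).

(* number of arcs from inner point a to the outside, resp. from outer
   point o to the inside, i.e. crossing the chord l *)
Definition cin (a : P) : nat :=
  \sum_(o : P | ~~ inside o) (m (a, o) + m (o, a)).
Definition cout (o : P) : nat :=
  \sum_(a : P | inside a) (m (a, o) + m (o, a)).

(* inner endpoints of the crossing arcs after reflection, listed in the
   order of the crossing points along l from the end near p *)
Definition new_inner : seq P :=
  flatten [seq nseq (cin (refl a)) a | a <- enum P & inside a].

(* outer endpoints of the crossing arcs, in the order of the crossing points
   along l from the end near p: p-1, p-2, ..., 0, n, n-1, ..., q+1 *)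
Definition outer_order : seq P :=
  [seq o <- rev (enum P) | (nat_of_ord o < p)%N] ++ [seq o <- rev (enum P) | (q < nat_of_ord o)%N].
Definition outer_ends : seq P :=
  flatten [seq nseq (cout o) o | o <- outer_order].

Definition new_cross : seq (P * P) := zip new_inner outer_ends.

Definition s_lab : {ffun P -> P} := [ffun a => dlab x (refl a)].

Definition s_mult : {ffun P * P -> nat} :=
  [ffun ab : P * P =>
    let: (a, b) := ab in
    if (a < b)%N then
      if inside a && inside b then m (refl b, refl a)
      else if ~~ inside a && ~~ inside b then m (a, b)
      else count (pred1 (if inside a then (a, b) else (b, a))) new_cross
    else 0].

Definition s_act : diagram n := (s_lab, s_mult).
End Cactus.

(* A word in the generators s_{p,q} of J_n; it acts right to left.  Every
   element of J_n is represented by such a word. *)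
Definition valid_gen n (g : nat * nat) : bool := [&& 0 < g.1, g.1 < g.2 & g.2 <= n]%N.

Definition act_word n (w : seq (nat * nat)) (x : diagram n) : diagram n :=
  foldr (fun g y => s_act g.1 g.2 y) x w.

Definition swap_labels n (i j : 'I_n.+1) (x : diagram n) : diagram n :=
  ([ffun a => let c := dlab x a in
              if c == i then j else if c == j then i else c], dmult x).

From mathcomp Require Import all_boot zify.
Set Implicit Arguments. Unset Strict Implicit. Unset Printing Implicit Defensive.

(* Swapping the labels at adjacent positions [a], [a + 1] of equal valence is
   exactly the action of [s_{a,a+1}]: reflecting the two-point region exchanges
   the labels, keeps the arcs joining [a] and [a + 1], and reconnects the arcs
   crossing the chord to the same outer points, since [a] and [a + 1] send
   equally many arcs across it.  For positions [a < b] further apart one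
   conjugates by the involution [s_{a+1,b}], which brings [z_b] to position
   [a + 1] without changing valences or creating crossings at [a], [a + 1].
   Both the involutivity and the adjacent swap rest on one combinatorial fact:
   pairing off, in order along a chord, the inner and outer endpoints of the
   arcs crossing it reproduces these arcs when the diagram is noncrossing. *)

Definition blocks (T : Type) (f : T -> nat) (s : seq T) : seq T :=
  flatten [seq nseq (f a) a | a <- s].

Lemma blocks_cons (T : Type) (f : T -> nat) a s :
  blocks f (a :: s) = nseq (f a) a ++ blocks f s.
Proof. by []. Qed.

Lemma eq_in_blocks (T : eqType) (f g : T -> nat) s :
  {in s, f =1 g} -> blocks f s = blocks g s.
Proof. by move=> fg; rewrite /blocks; congr flatten; apply/eq_in_map => a /fg ->. Qed.

Lemma mem_blocks (T : eqType) (f : T -> nat) s x :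
  (x \in blocks f s) = (x \in s) && (0 < f x).
Proof.
elim: s => [|a s IH] //=; rewrite blocks_cons mem_cat mem_nseq IH in_cons.
case: (eqVneq x a) => [->|ne] /=; last by rewrite andbF.
by case: (0 < f a); rewrite /= ?andbT ?andbF.
Qed.

Lemma size_blocks (T : Type) (f : T -> nat) s :
  size (blocks f s) = \sum_(a <- s) f a.
Proof. by elim: s => [|a s IH]; rewrite ?big_nil ?big_cons // size_cat size_nseq IH. Qed.

Lemma count_blocks (T : eqType) (f : T -> nat) s c :
  count (pred1 c) (blocks f s) = f c * count_mem c s.
Proof.
elim: s => [|a s IH]; first by rewrite muln0.
rewrite blocks_cons count_cat count_nseq IH /= mulnDr.
by case: (eqVneq a c) => [->|ne] /=; rewrite ?eqxx ?mul1n ?muln1 ?mul0n ?muln0 // (negbTE ne).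
Qed.

Lemma eq_or_trans (T : eqType) (lt : rel T) :
  transitive lt -> transitive (fun x y => (x == y) || lt x y).
Proof.
move=> tr y x z /orP [/eqP->|h1] // /orP [/eqP<-|h2]; rewrite ?h1 ?orbT //.
by rewrite (tr _ _ _ h1 h2) orbT.
Qed.

Lemma sorted_blocks (T : eqType) (lt : rel T) (f : T -> nat) s :
  transitive lt -> sorted lt s -> sorted (fun x y => (x == y) || lt x y) (blocks f s).
Proof.
move=> tr; rewrite !sorted_pairwise //; last exact: eq_or_trans.
elim: s => [|a s IH] //= /andP [ha hs].
rewrite blocks_cons pairwise_cat IH // andbT.
apply/andP; split.
  apply/allrelP => x y; rewrite mem_nseq mem_blocks => /andP [_ /eqP ->] /andP [hy _].
  by rewrite (allP ha _ hy) orbT.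
by elim: (f a) => //= k ->; rewrite andbT all_nseq eqxx orbT.
Qed.

Lemma mem_zip (S T : eqType) (s : seq S) (t : seq T) x y :
  (x, y) \in zip s t -> x \in s /\ y \in t.
Proof.
elim: s t => [|a s IH] [|b t] //=; rewrite in_cons.
case/orP => [/eqP [-> ->]|/IH [h1 h2]]; rewrite !in_cons ?eqxx //.
by rewrite h1 h2 !orbT.
Qed.

Lemma zip_swap (S T : Type) (s : seq S) (t : seq T) :
  zip t s = [seq (e.2, e.1) | e <- zip s t].
Proof. by elim: s t => [|a s IH] [|b t] //=; rewrite IH. Qed.

Lemma sum_seq_gt0 (T : eqType) (s : seq T) (F : T -> nat) :
  0 < \sum_(a <- s) F a -> exists2 a, a \in s & 0 < F a.
Proof.
elim: s => [|a s IH]; rewrite ?big_nil ?big_cons // addn_gt0.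
case/orP => [h|/IH [b hb hF]]; first by exists a; rewrite ?in_cons ?eqxx.
by exists b; rewrite // in_cons hb orbT.
Qed.

Lemma sum_seq_decr (T : eqType) (t0 : T) (ts : seq T) (F : T -> nat) (b : bool) :
  t0 \notin ts -> (b -> 0 < F t0) ->
  \sum_(t <- t0 :: ts) F t = b + \sum_(t <- t0 :: ts) (F t - (b && (t == t0))).
Proof.
move=> t0ts Ft0; rewrite !big_cons eqxx andbT.
have -> : \sum_(t <- ts) (F t - (b && (t == t0))) = \sum_(t <- ts) F t.
  apply: eq_big_seq => t tts; suff /negbTE -> : t != t0 by rewrite andbF subn0.
  by apply: contraNneq t0ts => <-.
by case: b Ft0 => [/(_ isT)|_]; rewrite ?subn0 //; lia.
Qed.

Lemma zip_sorted_mono (S T : eqType) (lt1 : rel S) (lt2 : rel T) s t a b a' b' :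
  transitive lt1 -> transitive lt2 ->
  sorted (fun x y => (x == y) || lt1 x y) s -> sorted (fun x y => (x == y) || lt2 x y) t ->
  size s = size t -> (a, b) \in zip s t -> (a', b') \in zip s t ->
  ~~ ((a' == a) || lt1 a' a) -> (b == b') || lt2 b b'.
Proof.
move=> /eq_or_trans t1 /eq_or_trans t2 ss st hsz h h' hn.
have r1 : reflexive (fun x y => (x == y) || lt1 x y) by move=> ?; rewrite eqxx.
have r2 : reflexive (fun x y => (x == y) || lt2 x y) by move=> ?; rewrite eqxx.
have sz : size (zip s t) = size s by rewrite size_zip hsz minnn.
case/(nthP (a, b)): h => k hk ek; case/(nthP (a, b)): h' => k' hk' ek'.
rewrite (nth_zip a b) // in ek; rewrite (nth_zip a b) // in ek'.
case: ek ek' => ea eb [ea' eb']; rewrite sz in hk hk'.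
case: (leqP k' k) => hkk.
  have := @sorted_leq_nth _ _ t1 r1 a s ss k' k; rewrite !inE => /(_ hk' hk hkk).
  by rewrite ea ea' (negbTE hn).
rewrite -eb -eb'; apply: (@sorted_leq_nth _ _ t2 r2 b t st k k'); rewrite ?inE -?hsz //.
exact: ltnW.
Qed.

(** * Noncrossing matchings *)

(* [ends us vs M] lists each [u] as often as its row sum; [matching] pairs these
   row endpoints with the column endpoints in order, which is how [s_act]
   reconnects the arcs at a chord. *)
Definition ends (T1 T2 : Type) (us : seq T1) (vs : seq T2) (M : T1 -> T2 -> nat) :=
  blocks (fun u => \sum_(v <- vs) M u v) us.

Definition matching (T1 T2 : Type) (us : seq T1) (vs : seq T2) (M : T1 -> T2 -> nat) :=
  zip (ends us vs M) (ends vs us (fun v u => M u v)).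

Definition decr (T1 T2 : eqType) (u0 : T1) (v0 : T2) (M : T1 -> T2 -> nat) u v :=
  M u v - ((u == u0) && (v == v0)).

Lemma ends_decr (T1 T2 : eqType) (u0 : T1) us (vs : seq T2) (M M' : T1 -> T2 -> nat) :
  \sum_(v <- vs) M u0 v = (\sum_(v <- vs) M' u0 v).+1 ->
  {in us, forall u, \sum_(v <- vs) M u v = \sum_(v <- vs) M' u v} ->
  ends (u0 :: us) vs M = u0 :: ends (u0 :: us) vs M'.
Proof. by rewrite /ends !blocks_cons => -> /eq_in_blocks ->. Qed.

Section MatchingSteps.
Variables (T1 T2 : eqType).
Implicit Types (us : seq T1) (vs : seq T2) (M : T1 -> T2 -> nat).

Lemma matching_swap us vs M :
  matching vs us (fun v u => M u v) = [seq (e.2, e.1) | e <- matching us vs M].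
Proof. exact: zip_swap. Qed.

Lemma matching_zero_row u0 us vs M : \sum_(v <- vs) M u0 v = 0 ->
  matching (u0 :: us) vs M = matching us vs M.
Proof.
move=> row0; rewrite /matching /ends blocks_cons row0; congr zip.
apply: eq_in_blocks => v vvs; rewrite big_cons.
by move: row0 => /eqP; rewrite sum_nat_seq_eq0 => /allP /(_ v vvs) /eqP ->.
Qed.

Lemma matching_corner u0 us v0 vs M : u0 \notin us -> v0 \notin vs -> 0 < M u0 v0 ->
  matching (u0 :: us) (v0 :: vs) M =
  (u0, v0) :: matching (u0 :: us) (v0 :: vs) (decr u0 v0 M).
Proof.
move=> u0us v0vs M00.
have row u : \sum_(v <- v0 :: vs) M u v =
    (u == u0) + \sum_(v <- v0 :: vs) decr u0 v0 M u v.
  by apply: sum_seq_decr => // /eqP ->.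
have col v : \sum_(u <- u0 :: us) M u v =
    (v == v0) + \sum_(u <- u0 :: us) decr u0 v0 M u v.
  under [in RHS]eq_bigr do rewrite /decr andbC.
  by apply: sum_seq_decr => // /eqP ->.
rewrite /matching (ends_decr (M' := decr u0 v0 M)); last first.
- by move=> u uus; rewrite row; case: eqP uus u0us => // -> ->.
- by rewrite row eqxx.
rewrite (ends_decr (M' := fun v u => decr u0 v0 M u v)) //.
- by rewrite col eqxx.
- by move=> v vvs; rewrite col; case: eqP vvs v0vs => // -> ->.
Qed.

Lemma sum_rows_decr u0 us v0 vs M : v0 \notin vs -> 0 < M u0 v0 ->
  \sum_(u <- us) \sum_(v <- v0 :: vs) M u v =
  \sum_(u <- us) (u == u0) + \sum_(u <- us) \sum_(v <- v0 :: vs) decr u0 v0 M u v.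
Proof.
move=> v0vs M00; rewrite -big_split; apply: eq_bigr => u _.
by apply: sum_seq_decr => // /eqP ->.
Qed.

End MatchingSteps.

Lemma matching_zero_col (T1 T2 : eqType) (us : seq T1) (v0 : T2) vs (M : T1 -> T2 -> nat) :
  \sum_(u <- us) M u v0 = 0 -> matching us (v0 :: vs) M = matching us vs M.
Proof.
move=> col0; transitivity [seq (e.2, e.1) | e <- matching (v0 :: vs) us (fun v u => M u v)].
  exact: matching_swap.
by rewrite matching_zero_row //; symmetry; apply: matching_swap.
Qed.

Section NoncrossingMatching.
Variables (T1 T2 : eqType) (ltu : rel T1) (ltv : rel T2).
Hypotheses (ltu_trans : transitive ltu) (ltv_trans : transitive ltv)
  (ltu_irr : irreflexive ltu) (ltv_irr : irreflexive ltv).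

Definition noncrossing (M : T1 -> T2 -> nat) :=
  forall u u' v v', ltu u u' -> ltv v v' -> M u v' = 0 \/ M u' v = 0.

Lemma noncrossing_decr u0 v0 M : noncrossing M -> noncrossing (decr u0 v0 M).
Proof. by move=> ncM u u' v v' /ncM /[apply] -[] Muv; [left|right]; rewrite /decr Muv. Qed.

Lemma noncrossing_corner u0 us v0 vs M :
  path ltu u0 us -> path ltv v0 vs -> noncrossing M ->
  0 < \sum_(v <- v0 :: vs) M u0 v -> 0 < \sum_(u <- u0 :: us) M u v0 -> 0 < M u0 v0.
Proof.
move=> pu pv ncM /sum_seq_gt0 [v hv Mv] /sum_seq_gt0 [u hu Mu].
rewrite lt0n; apply/negP => /eqP M00.
move: hv hu Mv Mu; rewrite !in_cons.
case: (eqVneq v v0) => [->|nv] /=; first by rewrite M00.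
case: (eqVneq u u0) => [->|nu] /=; first by rewrite M00.
move=> /(allP (order_path_min ltv_trans pv)) v0v /(allP (order_path_min ltu_trans pu)) u0u.
by case: (ncM _ _ _ _ u0u v0v) => ->.
Qed.

(* Induction: drop an empty first row or column; otherwise noncrossingness makes
   the corner entry positive and [matching] starts with the pair [(u0, v0)]. *)
Lemma count_matching us vs M u v :
  sorted ltu us -> sorted ltv vs -> noncrossing M -> u \in us -> v \in vs ->
  count (pred1 (u, v)) (matching us vs M) = M u v.
Proof.
have [N] := ubnP (size us + size vs + \sum_(u <- us) \sum_(v <- vs) M u v).
elim: N us vs M u v => // N IH [|u0 us] [|v0 vs] // M u v bound su sv ncM hu hv.
have u0us : u0 \notin us by have /andP [] := sorted_uniq ltu_trans ltu_irr su.
have v0vs : v0 \notin vs by have /andP [] := sorted_uniq ltv_trans ltv_irr sv.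
have [row0|row_pos] := posnP (\sum_(v <- v0 :: vs) M u0 v).
  rewrite matching_zero_row //.
  have [->|nu] := eqVneq u u0.
    move: row0 => /eqP; rewrite sum_nat_seq_eq0 => /allP /(_ v hv) /eqP ->.
    by apply/count_memPn/negP => /mem_zip []; rewrite mem_blocks (negbTE u0us).
  apply: IH; rewrite ?(path_sorted su) //; last by move: hu; rewrite in_cons (negbTE nu).
  by move: bound; rewrite big_cons row0 /=; lia.
have [col0|col_pos] := posnP (\sum_(u <- u0 :: us) M u v0).
  rewrite matching_zero_col //.
  have [->|nv] := eqVneq v v0.
    move: col0 => /eqP; rewrite sum_nat_seq_eq0 => /allP /(_ u hu) /eqP ->.
    by apply/count_memPn/negP => /mem_zip [_]; rewrite mem_blocks (negbTE v0vs).
  apply: IH; rewrite ?(path_sorted sv) //; last by move: hv; rewrite in_cons (negbTE nv).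
  suff: \sum_(u <- u0 :: us) \sum_(v <- vs) M u v <=
        \sum_(u <- u0 :: us) \sum_(v <- v0 :: vs) M u v by move: bound => /=; lia.
  by apply: leq_sum => w _; rewrite big_cons leq_addl.
have M00 := noncrossing_corner su sv ncM row_pos col_pos.
have bound' : size (u0 :: us) + size (v0 :: vs) +
    \sum_(u <- u0 :: us) \sum_(v <- v0 :: vs) decr u0 v0 M u v < N.
  by move: bound; rewrite (sum_rows_decr (u0 :: us) v0vs M00) big_cons eqxx /=; lia.
rewrite matching_corner //= (IH _ _ _ _ _ bound' su sv (noncrossing_decr _ _ ncM) hu hv).
rewrite /decr xpair_eqE.
by case: (eqVneq u u0) => [->|]; case: (eqVneq v v0) => [->|] //= *; rewrite ?subn0 //; lia.
Qed.

End NoncrossingMatching.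

(** * Arc diagrams and the reflections [s_{p,q}] *)

Definition arcs_lt n (m : {ffun 'I_n.+1 * 'I_n.+1 -> nat}) :=
  forall a b : 'I_n.+1, ~~ (nat_of_ord a < b)%N -> m (a, b) = 0.

Definition arcs_noncrossing n (m : {ffun 'I_n.+1 * 'I_n.+1 -> nat}) :=
  forall a b c d : 'I_n.+1, (a < c)%N -> (c < b)%N -> (b < d)%N ->
    m (a, b) = 0 \/ m (c, d) = 0.

Definition arcs n (x : diagram n) (a b : 'I_n.+1) := dmult x (a, b) + dmult x (b, a).

Lemma arcsC n (x : diagram n) a b : arcs x a b = arcs x b a.
Proof. by rewrite /arcs addnC. Qed.

Lemma arcs_lt_self n (x : diagram n) a : arcs_lt (dmult x) -> arcs x a a = 0.
Proof. by move=> lz; rewrite /arcs lz ?ltnn. Qed.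

Lemma arcs_cross_false n (x : diagram n) (a b c d : 'I_n.+1) :
  arcs_lt (dmult x) -> arcs_noncrossing (dmult x) ->
  (a < c)%N -> (c < b)%N -> (b < d)%N -> 0 < arcs x a b -> 0 < arcs x c d -> False.
Proof.
move=> lz nc ac cb bd; rewrite /arcs (lz b a) ?(lz d c); try lia.
by rewrite !addn0; case: (nc a b c d ac cb bd) => ->.
Qed.

Section Region.
Variables (n p q : nat).
Hypotheses (p_gt0 : 0 < p) (p_lt_q : p < q) (q_le_n : q <= n).
Local Notation P := 'I_n.+1.
Local Notation ins := (@inside n p q).
Local Notation rf := (@refl n p q).

Lemma insideE (a : P) : ins a = (p <= a <= q). Proof. by []. Qed.

Lemma refl_val (a : P) : ins a -> nat_of_ord (rf a) = p + q - a.
Proof. by move=> h; rewrite /refl h /= inordK //; move: h; rewrite insideE; lia. Qed.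

Lemma refl_out (a : P) : ~~ ins a -> rf a = a.
Proof. by rewrite /refl => /negbTE ->. Qed.

Lemma inside_refl (a : P) : ins (rf a) = ins a.
Proof.
case h: (ins a); last by rewrite refl_out ?h.
by rewrite insideE refl_val //; move: h; rewrite insideE; lia.
Qed.

Lemma reflK : involutive rf.
Proof.
move=> a; case h: (ins a); last by rewrite !refl_out ?h.
apply: val_inj => /=; rewrite refl_val ?inside_refl // refl_val //.
by move: h; rewrite insideE; lia.
Qed.

Lemma refl_inj : injective rf. Proof. exact: inv_inj reflK. Qed.

(* Position along the chord of the crossing point of an arc towards the outer
   point [o], counted from the end near [p] as in [outer_order]. *)
Definition outer_rank (o : P) : nat := if (o < p)%N then p - 1 - o else p + n - o.

Definition lt_inner (a b : P) := [&& ins a, ins b & (a < b)%N].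
Definition lt_outer (a b : P) := [&& ~~ ins a, ~~ ins b & outer_rank a < outer_rank b].
Definition inner_points := [seq a <- enum P | ins a].

Lemma lt_inner_trans : transitive lt_inner.
Proof. by move=> b a c /and3P [h1 h2 h3] /and3P [h4 h5 h6]; rewrite /lt_inner h1 h5 /=; lia. Qed.
Lemma lt_outer_trans : transitive lt_outer.
Proof. by move=> b a c /and3P [h1 h2 h3] /and3P [h4 h5 h6]; rewrite /lt_outer h1 h5 /=; lia. Qed.
Lemma lt_inner_irr : irreflexive lt_inner.
Proof. by move=> a; rewrite /lt_inner ltnn !andbF. Qed.
Lemma lt_outer_irr : irreflexive lt_outer.
Proof. by move=> a; rewrite /lt_outer ltnn !andbF. Qed.

Lemma mem_inner a : (a \in inner_points) = ins a.
Proof. by rewrite mem_filter mem_enum andbT. Qed.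

Lemma mem_outer o : (o \in outer_order n p q) = ~~ ins o.
Proof. by rewrite mem_cat !mem_filter mem_rev mem_enum !andbT insideE negb_and -!ltnNge. Qed.

Lemma sorted_inner : sorted lt_inner inner_points.
Proof.
have s0 : sorted (relpre val ltn) (enum P) by rewrite -sorted_map val_enum_ord iota_ltn_sorted.
have s1 := sorted_filter (fun b a c => @ltn_trans (val b) (val a) (val c)) ins s0.
apply: (sub_in_sorted (P := ins)) s1; last by apply/allP => a; rewrite mem_filter => /andP [].
by move=> a b ha hb h; apply/and3P; split.
Qed.

Lemma sorted_outer : sorted lt_outer (outer_order n p q).
Proof.
have s0 : sorted (relpre val ltn) (enum P) by rewrite -sorted_map val_enum_ord iota_ltn_sorted.
have s1 : sorted (fun a b : P => (b < a)%N) (rev (enum P)) by rewrite rev_sorted.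
have trg : transitive (fun a b : P => (b < a)%N).
  by move=> b a c h1 h2; exact: ltn_trans h2 h1.
have sorted_part (Q : pred P) : {in Q &, forall a b : P, (b < a)%N -> lt_outer a b} ->
    sorted lt_outer [seq o <- rev (enum P) | Q o].
  move=> QQ; apply: (sub_in_sorted (P := Q)) (sorted_filter trg _ s1) => //.
  by apply/allP => a; rewrite mem_filter => /andP [].
rewrite sorted_pairwise; last exact: lt_outer_trans.
rewrite pairwise_cat -!sorted_pairwise; try exact: lt_outer_trans.
apply/and3P; split.
- apply/allrelP => a b; rewrite !mem_filter => /andP [ha _] /andP [hb _].
  rewrite /lt_outer !insideE /outer_rank ha (_ : (b < p)%N = false); last by lia.
  by move: (ltn_ord b); lia.
- apply: sorted_part => a b ha hb /= h; have {}ha : (a < p)%N := ha; have {}hb : (b < p)%N := hb.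
  by rewrite /lt_outer !insideE /outer_rank ha hb /=; lia.
- apply: sorted_part => a b ha hb /= h; have {}ha : (q < a)%N := ha; have {}hb : (q < b)%N := hb.
  rewrite /lt_outer !insideE /outer_rank (_ : (a < p)%N = false) 1?(_ : (b < p)%N = false) /=;
    by move: (ltn_ord a) (ltn_ord b); lia.
Qed.

Lemma uniq_inner : uniq inner_points.
Proof. exact: (sorted_uniq lt_inner_trans lt_inner_irr) sorted_inner. Qed.
Lemma uniq_outer : uniq (outer_order n p q).
Proof. exact: (sorted_uniq lt_outer_trans lt_outer_irr) sorted_outer. Qed.

Lemma sum_inner (F : P -> nat) : \sum_(a | ins a) F a = \sum_(a <- inner_points) F a.
Proof.
rewrite -big_filter; apply: perm_big; apply: uniq_perm.
- exact: filter_uniq (index_enum_uniq _).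
- exact: uniq_inner.
- by move=> o; rewrite mem_filter mem_index_enum andbT mem_inner.
Qed.

Lemma sum_outer (F : P -> nat) : \sum_(o | ~~ ins o) F o = \sum_(o <- outer_order n p q) F o.
Proof.
rewrite -big_filter; apply: perm_big; apply: uniq_perm.
- exact: filter_uniq (index_enum_uniq _).
- exact: uniq_outer.
- by move=> o; rewrite mem_filter mem_index_enum andbT mem_outer.
Qed.

Implicit Type x : diagram n.

Lemma cinE x a : cin p q x a = \sum_(o <- outer_order n p q) arcs x a o.
Proof. by rewrite -sum_outer. Qed.

Lemma coutE x o : cout p q x o = \sum_(a <- inner_points) arcs x a o.
Proof. by rewrite -sum_inner. Qed.

Lemma new_innerE x : new_inner p q x = blocks (fun a => cin p q x (rf a)) inner_points.
Proof. by []. Qed.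

Lemma outer_endsE x : outer_ends p q x = blocks (cout p q x) (outer_order n p q).
Proof. by []. Qed.

Definition chord_noncrossing x := noncrossing lt_inner lt_outer (arcs x).

Lemma noncrossing_chord x :
  arcs_lt (dmult x) -> arcs_noncrossing (dmult x) -> chord_noncrossing x.
Proof.
move=> lz nc u u' v v' /and3P [hu hu' uu] /and3P [hv hv' vv].
move: hu hu' hv hv' vv; rewrite !insideE /outer_rank => hu hu' hv hv' vv.
have F := arcs_cross_false lz nc.
case: (posnP (arcs x u v')) => [->|p1]; first by left.
case: (posnP (arcs x u' v)) => [->|p2]; first by right.
exfalso; move: vv (ltn_ord v) (ltn_ord v').
case: (ltnP v p) => h1; case: (ltnP v' p) => h2 vv o1 o2.
- by apply: (F v' u v u'); [lia|lia|lia|rewrite arcsC|rewrite arcsC].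
- by apply: (F v u' u v'); [lia|lia|lia|rewrite arcsC|].
- lia.
- by apply: (F u v' u' v); lia.
Qed.

Lemma count_crossing_matching x u o : chord_noncrossing x -> ins u -> ~~ ins o ->
  count (pred1 (u, o)) (zip (blocks (cin p q x) inner_points) (outer_ends p q x)) =
  arcs x u o.
Proof.
move=> ncx hu ho.
have -> : zip (blocks (cin p q x) inner_points) (outer_ends p q x) =
          matching inner_points (outer_order n p q) (arcs x).
  rewrite /matching /ends outer_endsE; congr zip; apply: eq_in_blocks => a _.
    exact: cinE.
  exact: coutE.
apply: (count_matching lt_inner_trans lt_outer_trans lt_inner_irr lt_outer_irr);
  by rewrite ?mem_inner ?mem_outer ?sorted_inner ?sorted_outer.
Qed.

Lemma s_multE x (a b : P) : dmult (s_act p q x) (a, b) =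
  if (a < b)%N then (if ins a && ins b then dmult x (rf b, rf a)
   else if ~~ ins a && ~~ ins b then dmult x (a, b)
   else count (pred1 (if ins a then (a, b) else (b, a))) (new_cross p q x)) else 0.
Proof. by rewrite /dmult /= ffunE. Qed.

Lemma s_labE x (a : P) : dlab (s_act p q x) a = dlab x (rf a).
Proof. by rewrite /dlab /s_act [(_, _).1]/= /s_lab ffunE. Qed.

Lemma arcs_lt_act x : arcs_lt (dmult (s_act p q x)).
Proof. by move=> c d h; rewrite s_multE (negbTE h). Qed.

Lemma arcs_act_cross x u o : ins u -> ~~ ins o ->
  arcs (s_act p q x) u o = count (pred1 (u, o)) (new_cross p q x).
Proof.
move=> hu ho; rewrite /arcs !s_multE hu (negbTE ho) andbF andbT.
case: (ltngtP u o) => h; rewrite ?addn0 ?add0n //.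
by move: hu ho; rewrite !insideE h => ->.
Qed.

Lemma arcs_act_outside x a b : arcs_lt (dmult x) -> ~~ ins a -> ~~ ins b ->
  arcs (s_act p q x) a b = arcs x a b.
Proof.
move=> lz ha hb; rewrite /arcs !s_multE (negbTE ha) (negbTE hb) /=.
case: (ltngtP a b) => h.
- by rewrite (lz b a) ?addn0 //; lia.
- by rewrite (lz a b) ?addn0 ?add0n //; lia.
- by rewrite (val_inj h) (lz b b) ?ltnn.
Qed.

Lemma arcs_act_inside x a b : arcs_lt (dmult x) -> ins a -> ins b ->
  arcs (s_act p q x) a b = arcs x (rf a) (rf b).
Proof.
move=> lz ha hb; rewrite /arcs !s_multE ha hb /=.
have ra := refl_val ha; have rb := refl_val hb.
move: ha hb; rewrite !insideE => ha hb.
case: (ltngtP a b) => h.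
- by rewrite (lz (rf a) (rf b)) ?addn0 ?add0n //; rewrite ra rb; lia.
- by rewrite (lz (rf b) (rf a)) ?addn0 //; rewrite ra rb; lia.
- by rewrite (val_inj h) (lz (rf b) (rf b)) ?ltnn.
Qed.

Lemma sum_count_pairl (z : seq (P * P)) (c : P) (Q : pred P) : all (fun e => Q e.2) z ->
  \sum_(o | Q o) count (pred1 (c, o)) z = count (pred1 c) (unzip1 z).
Proof.
elim: z => [|[e1 e2] z IH] /=; first by rewrite big1.
case/andP => Qe2 /IH <-; rewrite big_split /=; congr (_ + _).
rewrite (bigD1 e2) //= xpair_eqE eqxx andbT big1 ?addn0 // => o /andP [_ ne].
by rewrite xpair_eqE (eq_sym e2) (negbTE ne) andbF.
Qed.

Lemma sum_count_pairr (z : seq (P * P)) (c : P) (Q : pred P) : all (fun e => Q e.1) z ->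
  \sum_(o | Q o) count (pred1 (o, c)) z = count (pred1 c) (unzip2 z).
Proof.
elim: z => [|[e1 e2] z IH] /=; first by rewrite big1.
case/andP => Qe1 /IH <-; rewrite big_split /=; congr (_ + _).
rewrite (bigD1 e1) //= xpair_eqE eqxx big1 ?addn0 // => o /andP [_ ne].
by rewrite xpair_eqE (eq_sym e1) (negbTE ne).
Qed.

Lemma size_new_inner x : size (new_inner p q x) = size (outer_ends p q x).
Proof.
rewrite new_innerE outer_endsE !size_blocks -sum_inner -sum_outer.
rewrite [LHS](reindex_inj refl_inj) /=.
under eq_bigl do rewrite inside_refl.
under eq_bigr do rewrite reflK.
by rewrite /cin /cout exchange_big.
Qed.

Lemma new_cross_inside x e : e \in new_cross p q x -> ins e.1 && ~~ ins e.2.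
Proof.
case: e => a b /mem_zip []; rewrite new_innerE outer_endsE !mem_blocks.
by rewrite mem_inner mem_outer => /andP [-> _] /andP [-> _].
Qed.

Lemma cin_act x c : ins c -> cin p q (s_act p q x) c = cin p q x (rf c).
Proof.
move=> hc; rewrite /cin.
under eq_bigr => o ho do rewrite -/(arcs _ c o) arcs_act_cross //.
rewrite sum_count_pairl; last by apply/allP => e /new_cross_inside /andP [].
rewrite unzip1_zip ?size_new_inner // new_innerE count_blocks.
by rewrite count_uniq_mem ?uniq_inner // mem_inner hc muln1.
Qed.

Lemma cout_act x o : ~~ ins o -> cout p q (s_act p q x) o = cout p q x o.
Proof.
move=> ho; rewrite /cout.
under eq_bigr => a ha do rewrite -/(arcs _ a o) arcs_act_cross //.
rewrite sum_count_pairr; last by apply/allP => e /new_cross_inside /andP [].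
rewrite unzip2_zip ?size_new_inner // outer_endsE count_blocks.
by rewrite count_uniq_mem ?uniq_outer // mem_outer ho muln1.
Qed.

Lemma valence_act x c : arcs_lt (dmult x) -> valence (s_act p q x) c = valence x (rf c).
Proof.
move=> lz; rewrite /valence (bigID ins) [in RHS](bigID ins) /=.
case: (boolP (ins c)) => hc.
  congr (_ + _); last exact: cin_act.
  rewrite [RHS](reindex_inj refl_inj); apply: eq_big => [b|b hb].
    by rewrite inside_refl.
  exact: arcs_act_inside.
rewrite refl_out //; congr (_ + _); last by apply: eq_bigr => b hb; exact: arcs_act_outside.
transitivity (cout p q (s_act p q x) c); first by apply: eq_bigr => b _; rewrite addnC.
by rewrite cout_act //; apply: eq_bigr => b _; rewrite addnC.
Qed.

Lemma new_cross_inner_arc x a b : (a, b) \in new_cross p q x ->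
  exists2 o, ~~ ins o & 0 < arcs x (rf a) o.
Proof.
case/mem_zip; rewrite new_innerE mem_blocks cinE => /andP [_ /sum_seq_gt0 [o ho h]] _.
by exists o; rewrite // -mem_outer.
Qed.

Lemma new_cross_outer_arc x a b : (a, b) \in new_cross p q x ->
  exists2 c, ins c & 0 < arcs x c b.
Proof.
case/mem_zip => _; rewrite outer_endsE mem_blocks coutE => /andP [_ /sum_seq_gt0 [c hc h]].
by exists c; rewrite // -mem_inner.
Qed.

Lemma s_mult_inside x (a b : P) : ins a -> ins b -> (a < b)%N ->
  dmult (s_act p q x) (a, b) = dmult x (rf b, rf a).
Proof. by move=> ha hb ab; rewrite s_multE ab ha hb. Qed.

Lemma s_mult_outside x (a b : P) : ~~ ins a -> ~~ ins b -> (a < b)%N ->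
  dmult (s_act p q x) (a, b) = dmult x (a, b).
Proof. by move=> ha hb ab; rewrite s_multE ab (negbTE ha) (negbTE hb). Qed.

Lemma s_mult_act_cross x y (c d : P) : arcs_lt (dmult x) -> chord_noncrossing x ->
  new_cross p q y = zip (blocks (cin p q x) inner_points) (outer_ends p q x) ->
  (c < d)%N -> ins c != ins d -> dmult (s_act p q y) (c, d) = dmult x (c, d).
Proof.
move=> lz ncx Ey cd; rewrite s_multE cd Ey.
case: (boolP (ins c)) => hc; case: (boolP (ins d)) => hd //= _.
- by rewrite count_crossing_matching // /arcs (lz d c) ?addn0 //; lia.
- by rewrite count_crossing_matching // /arcs (lz d c) ?add0n //; lia.
Qed.

Lemma s_act_invol x : arcs_lt (dmult x) -> arcs_noncrossing (dmult x) ->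
  s_act p q (s_act p q x) = x.
Proof.
move=> lz nc; rewrite [RHS]surjective_pairing /s_act; congr (_, _).
  by apply/ffunP => a; rewrite ffunE -/(dlab _) s_labE reflK.
have Ecross : new_cross p q (s_act p q x) =
    zip (blocks (cin p q x) inner_points) (outer_ends p q x).
  rewrite /new_cross new_innerE !outer_endsE; congr zip; apply: eq_in_blocks => c.
    by rewrite mem_inner => hc; rewrite cin_act ?inside_refl // reflK.
  by rewrite mem_outer => hc; rewrite cout_act.
apply/ffunP => -[a b]; rewrite -/(dmult _ (a, b)).
case: (ltnP a b) => ab; last by rewrite s_multE ltnNge ab lz // -leqNgt.
have [ha|ha] := boolP (ins a); have [hb|hb] := boolP (ins b).
- have ba : (rf b < rf a)%N by rewrite !refl_val //; move: ha hb ab; rewrite !insideE; lia.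
  by rewrite s_mult_inside // s_mult_inside ?inside_refl // !reflK.
- by apply: (s_mult_act_cross lz (noncrossing_chord lz nc) Ecross ab); rewrite ha (negbTE hb).
- by apply: (s_mult_act_cross lz (noncrossing_chord lz nc) Ecross ab); rewrite hb (negbTE ha).
- by rewrite !s_mult_outside.
Qed.

Section Adjacent.
Variables (a b : P).
Hypotheses (q_eq : q = p.+1) (a_p : nat_of_ord a = p) (b_q : nat_of_ord b = q).

Lemma inside_adj c : ins c = (c == a) || (c == b).
Proof.
rewrite insideE -!val_eqE /= a_p b_q q_eq.
by case: (ltngtP c p) => h; case: (ltngtP c p.+1) => h'; rewrite ?orbT ?orbF //=; lia.
Qed.

Lemma refl_adj_l : rf a = b.
Proof.
by apply: val_inj; rewrite /= refl_val ?inside_adj ?eqxx // a_p b_q; lia.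
Qed.

Lemma refl_adj_r : rf b = a.
Proof. by rewrite -refl_adj_l reflK. Qed.

Lemma cin_adj x : arcs_lt (dmult x) -> valence x a = valence x b ->
  cin p q x a = cin p q x b.
Proof.
move=> lz.
have ab : b != a by rewrite -val_eqE /= a_p b_q; lia.
have V c : valence x c = arcs x c a + arcs x c b + cin p q x c.
  rewrite /valence (bigID ins) /= (bigD1 a) ?inside_adj ?eqxx // (bigD1 b) /=; last first.
    by rewrite inside_adj eqxx orbT ab.
  rewrite big1 ?addn0 // => d /andP [/andP [hd na] nb].
  by move: hd; rewrite inside_adj (negbTE na) (negbTE nb).
by rewrite !V !arcs_lt_self // (arcsC x b a); lia.
Qed.

Lemma s_act_adj x : arcs_lt (dmult x) -> chord_noncrossing x ->
  injective (dlab x) -> valence x a = valence x b ->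
  s_act p q x = swap_labels (dlab x a) (dlab x b) x.
Proof.
move=> lz ncx inj vab.
have ab : dlab x a != dlab x b by apply/negP => /eqP /inj ea; move: a_p b_q; rewrite ea; lia.
rewrite /swap_labels [LHS]surjective_pairing; congr (_, _).
  apply/ffunP => c; rewrite !ffunE.
  case: (eqVneq c a) => [->|nca]; first by rewrite refl_adj_l eqxx.
  case: (eqVneq c b) => [->|ncb]; first by rewrite refl_adj_r eq_sym (negbTE ab) eqxx.
  rewrite refl_out ?inside_adj ?(negbTE nca) ?(negbTE ncb) //.
  by rewrite !(inj_eq inj) (negbTE nca) (negbTE ncb).
have Ecross : new_cross p q x = zip (blocks (cin p q x) inner_points) (outer_ends p q x).
  rewrite /new_cross new_innerE; congr zip; apply: eq_in_blocks => c.
  rewrite mem_inner inside_adj => /orP [] /eqP ->;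
    by rewrite ?refl_adj_l ?refl_adj_r (cin_adj lz vab).
apply/ffunP => -[c d]; change (dmult (s_act p q x) (c, d) = dmult x (c, d)).
case: (ltnP c d) => cd; last by rewrite s_multE ltnNge cd (lz c d) // -leqNgt.
have [hc|hc] := boolP (ins c); have [hd|hd] := boolP (ins d).
- move: hc hd cd; rewrite !inside_adj => /orP [] /eqP -> /orP [] /eqP -> cd.
  + by rewrite ltnn in cd.
  + by rewrite s_mult_inside ?inside_adj ?eqxx ?orbT // refl_adj_l refl_adj_r.
  + by move: cd; rewrite a_p b_q q_eq; lia.
  + by rewrite ltnn in cd.
- apply: (s_mult_act_cross lz ncx Ecross cd).
  by rewrite hc (negbTE hd).
- apply: (s_mult_act_cross lz ncx Ecross cd).
  by rewrite hd (negbTE hc).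
- by rewrite s_mult_outside.
Qed.

End Adjacent.

End Region.

(** * Swapping two labels *)

Section ActLeft.
Variables (n p q : nat).
Hypotheses (p_gt1 : 1 < p) (p_lt_q : p < q) (q_le_n : q <= n).
Variable x : diagram n.
Hypotheses (lz : arcs_lt (dmult x)) (nc : arcs_noncrossing (dmult x)).
Variables (u u' : 'I_n.+1).
Hypotheses (u_p : nat_of_ord u = p.-1) (u'_p : nat_of_ord u' = p).
Local Notation ins := (@inside n p q).
Local Notation rf := (@refl n p q).
Local Notation y := (s_act p q x).

Let p_gt0 : 0 < p. Proof. lia. Qed.
Let inside_u : ~~ ins u. Proof. by rewrite insideE u_p; lia. Qed.
Let inside_u' : ins u'. Proof. by rewrite insideE u'_p; lia. Qed.

Lemma act_left_cross_inside (v v' : 'I_n.+1) : ins v -> p < v' -> v' < v ->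
  0 < arcs y u v' -> 0 < arcs y u' v -> False.
Proof.
move=> iv pv' v'v h1 h2.
have iv' : ins v' by move: iv; rewrite !insideE; lia.
rewrite (arcs_act_inside p_gt0 p_lt_q q_le_n) // in h2.
rewrite arcsC arcs_act_cross // -has_count has_pred1 in h1.
have [o io ho] := new_cross_inner_arc p_gt0 p_lt_q q_le_n h1.
have rv := refl_val p_gt0 p_lt_q q_le_n iv.
have rv' := refl_val p_gt0 p_lt_q q_le_n iv'.
have ru' : nat_of_ord (rf u') = q by rewrite (refl_val p_gt0 p_lt_q q_le_n) // u'_p; lia.
move: iv iv' io (ltn_ord o); rewrite !insideE => iv iv' io oo.
have F := arcs_cross_false lz nc.
rewrite arcsC in h2.
case: (ltnP o p) => op.
  by apply: (F o (rf v') (rf v) (rf u')); rewrite ?rv ?rv' ?ru' // 1?arcsC //; lia.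
by apply: (F (rf v) (rf u') (rf v') o) => //; rewrite ?rv ?rv' ?ru'; lia.
Qed.

Lemma act_left_cross_mixed (v v' : 'I_n.+1) : ~~ ins v -> ins v' -> v != u -> p < v' ->
  0 < arcs y u v' -> 0 < arcs y u' v -> False.
Proof.
move=> iv iv' vu pv' h1 h2.
rewrite arcsC arcs_act_cross // -has_count has_pred1 in h1.
rewrite arcs_act_cross // -has_count has_pred1 in h2.
have := zip_sorted_mono (lt_inner_trans p_gt0 p_lt_q q_le_n) (lt_outer_trans p_gt0 p_lt_q q_le_n)
  (sorted_blocks _ (lt_inner_trans p_gt0 p_lt_q q_le_n) (sorted_inner n p q))
  (sorted_blocks _ (lt_outer_trans p_gt0 p_lt_q q_le_n) (sorted_outer p_gt0 p_lt_q q_le_n))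
  (size_new_inner p_gt0 p_lt_q q_le_n x) h2 h1.
have nle : ~~ ((v' == u') || lt_inner p q v' u').
  apply/negP => /orP [/eqP e|/and3P [_ _]]; first by move: pv'; rewrite e u'_p ltnn.
  by rewrite u'_p; lia.
move=> /(_ nle) /orP [/eqP e|/and3P [_ _]]; first by rewrite e eqxx in vu.
by rewrite /outer_rank u_p (_ : p.-1 < p = true); lia.
Qed.

Lemma act_left_cross_outside (v v' : 'I_n.+1) : ~~ ins v -> ~~ ins v' ->
  lt_outer p.-1 p v v' -> 0 < arcs y u v' -> 0 < arcs y u' v -> False.
Proof.
move=> iv iv' /and3P [hv hv' vv] h1 h2.
rewrite (arcs_act_outside p_gt0 p_lt_q q_le_n) // in h1.
rewrite arcs_act_cross // -has_count has_pred1 in h2.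
have [a ia ha] := new_cross_outer_arc p_gt0 p_lt_q q_le_n h2.
have F := arcs_cross_false lz nc.
move: iv iv' ia hv hv' vv; rewrite !insideE /outer_rank => iv iv' ia hv hv'.
case: (ltnP v p.-1) => c1; case: (ltnP v' p.-1) => c2 vv.
- by apply: (F v' u v a); rewrite ?(arcsC x v') ?(arcsC x v); lia.
- by apply: (F v a u v'); rewrite ?(arcsC x v); lia.
- by move: (ltn_ord v); lia.
- by apply: (F u v' a v); lia.
Qed.

End ActLeft.

(* Only the arcs at [p - 1] and [p] need checking here, so there is no need to
   show that [s_act] preserves noncrossing diagrams in general. *)
Lemma chord_noncrossing_act_left n p q (x : diagram n) :
  1 < p -> p < q -> q <= n -> arcs_lt (dmult x) -> arcs_noncrossing (dmult x) ->
  chord_noncrossing p.-1 p (s_act p q x).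
Proof.
move=> p_gt1 p_lt_q q_le_n lz nc u u' v v' /and3P [hu hu' uu] hvv'.
have /and3P [hv hv' vv] := hvv'.
move: hu hu' hv hv' vv; rewrite !insideE /outer_rank => hu hu' hv hv' vv.
have u_p : nat_of_ord u = p.-1 by lia.
have u'_p : nat_of_ord u' = p by lia.
case: (posnP (arcs (s_act p q x) u v')) => [->|h1]; first by left.
case: (posnP (arcs (s_act p q x) u' v)) => [->|h2]; first by right.
exfalso; move: (ltn_ord v) (ltn_ord v') => ov ov'.
have [iv|iv] := boolP (inside p q v).
  have vp : (v < p.-1) = false by move: iv; rewrite insideE; lia.
  apply: (act_left_cross_inside p_gt1 p_lt_q q_le_n lz nc u_p u'_p iv _ _ h1 h2);
    by rewrite vp in vv; case: (ltnP v' p.-1) vv => ? vv; lia.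
have [iv'|iv'] := boolP (inside p q v').
  apply: (act_left_cross_mixed p_gt1 p_lt_q q_le_n u_p u'_p iv iv' _ _ h1 h2).
    by rewrite -val_eqE /= u_p; lia.
  by move: iv'; rewrite insideE; lia.
exact: (act_left_cross_outside p_gt1 p_lt_q q_le_n lz nc u_p u'_p iv iv' hvv' h1 h2).
Qed.

Lemma swap_labels_act n p q (x : diagram n) (i j : 'I_n.+1) :
  s_act p q (swap_labels i j x) = swap_labels i j (s_act p q x).
Proof. by rewrite /swap_labels /s_act; congr (_, _); apply/ffunP => c; rewrite !ffunE. Qed.

Lemma swap_labelsC n (x : diagram n) (i j : 'I_n.+1) : i != j ->
  swap_labels i j x = swap_labels j i x.
Proof.
move=> ij; rewrite /swap_labels; congr (_, _); apply/ffunP => c; rewrite !ffunE /=.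
by case: (eqVneq (dlab x c) i) => [->|]; rewrite ?(negbTE ij).
Qed.

Lemma act_adj_swap n (x : diagram n) (a b : 'I_n.+1) :
  0 < a -> nat_of_ord b = a.+1 -> arcs_lt (dmult x) -> chord_noncrossing a b x ->
  injective (dlab x) -> valence x a = valence x b ->
  s_act a b x = swap_labels (dlab x a) (dlab x b) x.
Proof.
move=> a_gt0 b_a; have bn : b <= n by rewrite -ltnS ltn_ord.
by apply: (s_act_adj a_gt0 _ bn b_a) => //; rewrite b_a.
Qed.

Lemma act_conj_swap n (x : diagram n) (a b : 'I_n.+1) : 0 < a -> a.+1 < b ->
  arcs_lt (dmult x) -> arcs_noncrossing (dmult x) -> injective (dlab x) ->
  valence x a = valence x b ->
  s_act a.+1 b (s_act a a.+1 (s_act a.+1 b x)) = swap_labels (dlab x a) (dlab x b) x.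
Proof.
move=> a_gt0 ab lz nc inj vab.
have bn : b <= n by rewrite -ltnS ltn_ord.
have p_gt0 : 0 < a.+1 by [].
set y := s_act a.+1 b x.
set c : 'I_n.+1 := refl a.+1 b b.
have ia : ~~ inside a.+1 b a by rewrite insideE; lia.
have ib : inside a.+1 b b by rewrite insideE; lia.
have c_a : nat_of_ord c = a.+1 by rewrite (refl_val p_gt0 ab bn ib); lia.
have ya : dlab y a = dlab x a by rewrite s_labE refl_out.
have yc : dlab y c = dlab x b by rewrite s_labE (reflK p_gt0 ab bn).
have injy : injective (dlab y).
  by move=> d e; rewrite !s_labE => /inj /(refl_inj p_gt0 ab bn).
have vy : valence y a = valence y c.
  by rewrite !(valence_act p_gt0 ab bn _ lz) refl_out // (reflK p_gt0 ab bn).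
have ncy : chord_noncrossing a c y.
  by rewrite -[nat_of_ord a]/(a.+1.-1) c_a; apply: chord_noncrossing_act_left => //; lia.
have -> : s_act a a.+1 y = swap_labels (dlab y a) (dlab y c) y.
  by rewrite -c_a; apply: act_adj_swap => //; apply: arcs_lt_act.
by rewrite ya yc swap_labels_act (s_act_invol p_gt0 ab bn).
Qed.

Lemma swap_positions n (l : 'I_n.+1 -> nat) (x : diagram n) (a b : 'I_n.+1) :
  inX l x -> 0 < a -> a < b -> l (dlab x a) = l (dlab x b) ->
  exists2 w, all (valid_gen n) w & act_word w x = swap_labels (dlab x a) (dlab x b) x.
Proof.
case=> _ inj lz nc val a_gt0 ab lab.
have bn : b <= n by rewrite -ltnS ltn_ord.
have vab : valence x a = valence x b by rewrite !val lab.
have [b_a|b_a] := eqVneq (nat_of_ord b) a.+1.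
  exists [:: (nat_of_ord a, nat_of_ord b)]; first by rewrite /= /valid_gen /= a_gt0 ab bn.
  apply: act_adj_swap => //; exact: noncrossing_chord.
exists [:: (a.+1, nat_of_ord b); (nat_of_ord a, a.+1); (a.+1, nat_of_ord b)].
  by rewrite /= /valid_gen /= a_gt0 bn ltnSn /=; lia.
by apply: act_conj_swap => //; lia.
Qed.

Theorem mainTheorem2 (n : nat) (l : 'I_n.+1 -> nat) (x : diagram n)
    (i j : 'I_n.+1) :
  i != ord0 -> j != ord0 -> i != j -> l i = l j -> inX l x ->
  exists w : seq (nat * nat),
    all (valid_gen n) w /\ act_word w x = swap_labels i j x.
Proof.
move=> i0 j0 ij lij hx; case: (hx) => l0 inj _ _ _.
have [pos _ lab_pos] := injF_bij inj.
have pos_gt0 k : k != ord0 -> 0 < pos k.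
  move=> k0; rewrite lt0n; apply: contra k0 => /eqP pk.
  by rewrite -(lab_pos k) (_ : pos k = ord0) ?l0 //; apply: val_inj.
have [lt_ij|lt_ji|eq_ij] := ltngtP (pos i) (pos j).
- have [|w valid_w] := swap_positions hx (pos_gt0 i i0) lt_ij; first by rewrite !lab_pos.
  by rewrite !lab_pos; exists w.
- have [|w valid_w] := swap_positions hx (pos_gt0 j j0) lt_ji; first by rewrite !lab_pos.
  by rewrite !lab_pos swap_labelsC 1?eq_sym // => ?; exists w.
- by move: ij; rewrite -(lab_pos i) -(lab_pos j) (val_inj eq_ij) eqxx.
Qed.
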